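(* Let $\mathbb K$ be a field of characteristic $0$ and $N\ge1$. The image of the weight system $W^{\mathrm{St}}_{\mathfrak{gl}_N}:\mathcal A(\downarrow\downarrow)_{\mathbb K}\to\mathrm{End}(\mathbb K^N)^{\otimes2}$ associated with $(\mathfrak{gl}_N(\mathbb K),B_0,\mathrm{St})$ is a commutative subalgebra.
   Context: Jacobi diagrams on an oriented compact $1$-manifold $X$ span $\mathcal A(X)$ modulo AS, IHX, STU; $\mathcal A(X)_{\mathbb K}=\mathcal A(X)\otimes\mathbb K$; $\downarrow\downarrow$ is two downward oriented strands, and $\mathcal A(\downarrow\downarrow)$ is an algebra under stacking. For a metrized Lie algebra $(\mathfrak g,\langle\cdot,\cdot\rangle)$ over $\mathbb K$, the universal weight system $W_{\mathfrak g}:\mathcal A(\downarrow^{\otimes n})_{\mathbb K}\to U(\mathfrak g)^{\otimes n}$ is the algebra homomorphism obtained by putting on each edge the Casimir tensor $\Omega=\sum_av_a\otimes v^a$ (basis and dual basis w.r.t. the form), at each trivalent vertex $-\mathbf t$ where $\mathbf t\in\mathfrak g^{\otimes3}$ corresponds to $(x,y,z)\mapsto\langle[x,y],z\rangle$ (factors in cyclic order), contracting along edges and multiplying in $U(\mathfrak g)$ along each strand in its orientation order; for a representation $\rho:\mathfrak g\to\mathrm{End}(V)$, $W^\rho_{\mathfrak g}=U(\rho)^{\otimes n}\circ W_{\mathfrak g}$. $B_0(x,y)=\mathrm{tr}(xy)$ is the trace form and $\mathrm{St}$ the standard representation on $\mathbb K^N$. *)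

From HB Require Import structures.
From mathcomp Require Import all_boot all_order all_algebra.
From mathcomp Require Import mxtens.
Set Implicit Arguments. Unset Strict Implicit. Unset Printing Implicit Defensive.
Import GRing.Theory.
Local Open Scope ring_scope.

(* Jacobi diagrams on two downward oriented strands (the skeleton "↓↓").      *)
(* A diagram is encoded by half-edges ("slots"):                              *)
(*   - inl (inl i), i : 'I_n1 : the i-th univalent vertex (leg) on strand 1,  *)
(*     legs numbered 0,1,... in the order met along the strand orientation;   *)
(*   - inl (inr i), i : 'I_n2 : likewise on strand 2;                         *)
(*   - inr (v, k), v : 'I_nt, k : 'I_3 : the k-th half-edge at the trivalent  *)
(*     vertex v, the vertex orientation being the cyclic order 0 -> 1 -> 2.   *)
(* Edges are given by a fixed-point-free involution on slots.                 *)

Definition jslot (n1 n2 nt : nat) : finType :=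
  (('I_n1 + 'I_n2) + ('I_nt * 'I_3))%type.

Record jacobi2 := Jacobi2 {
  jd_n1 : nat;
  jd_n2 : nat;
  jd_nt : nat;
  jd_edge : jslot jd_n1 jd_n2 jd_nt -> jslot jd_n1 jd_n2 jd_nt;
  jd_edge_invol : forall s, jd_edge (jd_edge s) = s;
  jd_edge_nofix : forall s, jd_edge s <> s
}.

Definition leg1 (D : jacobi2) (i : 'I_(jd_n1 D)) : jslot (jd_n1 D) (jd_n2 D) (jd_nt D) :=
  inl (inl i).
Definition leg2 (D : jacobi2) (i : 'I_(jd_n2 D)) : jslot (jd_n1 D) (jd_n2 D) (jd_nt D) :=
  inl (inr i).
Definition tri (D : jacobi2) (v : 'I_(jd_nt D)) (k : 'I_3) :
  jslot (jd_n1 D) (jd_n2 D) (jd_nt D) := inr (v, k).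

(* gl_N(K) with the trace form B_0(x,y) = tr(xy).  Basis: elementary         *)
(* matrices E_ij; its B_0-dual basis is E_ji, so the Casimir tensor is        *)
(* Omega = \sum_(i,j) E_ij (x) E_ji.                                          *)

Definition glE (K : fieldType) (N : nat) (ij : 'I_N * 'I_N) : 'M[K]_N :=
  delta_mx ij.1 ij.2.

Definition B0 (K : fieldType) (N : nat) (x y : 'M[K]_N) : K := \tr (x *m y).

Definition lie (K : fieldType) (N : nat) (x y : 'M[K]_N) : 'M[K]_N :=
  x *m y - y *m x.

(* index of the dual basis vector *)
Definition dual_idx (N : nat) (ij : 'I_N * 'I_N) : 'I_N * 'I_N := (ij.2, ij.1).

Definition strand_prod (K : fieldType) (N n : nat) (F : 'I_n -> 'M[K]_N) : 'M[K]_N :=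
  \big[mulmx/1%:M]_(i < n) F i.

(* The weight system W^St_{gl_N} on a single Jacobi diagram, with values in   *)
(* End(K^N) (x) End(K^N), realised as 'M_(N*N) via the Kronecker product.     *)
(* A labelling assigns to every slot s a basis index; the edge {s, e s}       *)
(* carries the basis vector E_lab(s) at s and the dual vector at e s (this is *)
(* the Casimir tensor on the edge, summed over labellings).  Each trivalent   *)
(* vertex with half-edges carrying x,y,z (cyclic order) contributes           *)
(* -<[x,y],z>, i.e. the tensor -t; each leg carrying x contributes St(x) = x  *)
(* on its strand.                                                             *)
Definition weight_St (K : fieldType) (N : nat) (D : jacobi2) : 'M[K]_(N * N) :=
  \sum_(lab : {ffun jslot (jd_n1 D) (jd_n2 D) (jd_nt D) -> 'I_N * 'I_N}
        | [forall s, lab (@jd_edge D s) == dual_idx (lab s)])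
    ((\prod_(v < jd_nt D)
        (- B0 (lie (glE K (lab (tri v 0))) (glE K (lab (tri v 1))))
              (glE K (lab (tri v 2)))))
     *: tensmx (strand_prod (fun i => glE K (lab (leg1 i))))
               (strand_prod (fun i => glE K (lab (leg2 i))))).

Definition weight_image (K : fieldType) (N : nat) (M : 'M[K]_(N * N)) : Prop :=
  exists s : seq (K * jacobi2), M = \sum_(p <- s) p.1 *: weight_St K N p.2.

From HB Require Import structures.
From mathcomp Require Import all_boot all_order all_algebra.
From mathcomp Require Import mxtens.
From mathcomp Require Import all_fingroup ring zify.
Set Implicit Arguments. Unset Strict Implicit. Unset Printing Implicit Defensive.
Import GRing.Theory.
Local Open Scope ring_scope.

(* Stacking diagrams multiplies their weights and the empty diagram has weight
   1, so the image is a unital subalgebra.  For commutativity, conjugating every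
   label E_ij of a labelling by a monomial matrix g (a permutation s times a
   diagonal d) gives (d_i/d_j) E_(s i)(s j); along each edge the two factors
   cancel, so every weight commutes with g (x) g.  Taking g = diag(1,..,2,..,1)
   shows, in characteristic 0, that W(D) only connects e_a (x) e_b with itself
   and with e_b (x) e_a; taking g a transposition shows that W(D) commutes with
   the flip of the two tensor factors.  On each space span(e_a (x) e_b,
   e_b (x) e_a) the weights thus act as matrices [[p, q], [q, p]], which commute. *)

Definition jd_slot (D : jacobi2) : finType := jslot (jd_n1 D) (jd_n2 D) (jd_nt D).

Notation labelling N D := {ffun jd_slot D -> 'I_N * 'I_N}.

Section Labellings.
Variables (K : fieldType) (N : nat) (D : jacobi2).

Definition admissible (lab : labelling N D) : bool :=
  [forall s, lab (jd_edge s) == dual_idx (lab s)].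

Definition vertex_factor (lab : labelling N D) : K :=
  \prod_(v < jd_nt D)
     - B0 (lie (glE K (lab (tri v 0))) (glE K (lab (tri v 1)))) (glE K (lab (tri v 2))).

Definition labelling_weight (lab : labelling N D) : 'M[K]_(N * N) :=
  vertex_factor lab *: tensmx (strand_prod (fun i => glE K (lab (leg1 i))))
                              (strand_prod (fun i => glE K (lab (leg2 i)))).

Lemma weight_StE :
  weight_St K N D = \sum_(lab : labelling N D | admissible lab) labelling_weight lab.
Proof. by []. Qed.

End Labellings.

Lemma mxtens_index_inj {m n : nat} : injective (@mxtens_index m n).
Proof. exact: can_inj (@mxtens_indexK m n). Qed.

Lemma tensmx11 (R : comPzRingType) (m n : nat) :
  tensmx (1%:M : 'M[R]_m) (1%:M : 'M[R]_n) = 1%:M.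
Proof.
apply/matrixP => x y.
case: (mxtens_indexP x) => i1 i2; case: (mxtens_indexP y) => k1 k2.
rewrite tensmxE !mxE (inj_eq mxtens_index_inj) xpair_eqE.
by case: (i1 == k1); case: (i2 == k2); rewrite ?mul1r ?mul0r.
Qed.

Lemma no_jslot0 (s : jslot 0 0 0) : False.
Proof. by case: s => [[i|i]|[i k]]; case: i. Qed.

Definition jd_empty : jacobi2 :=
  @Jacobi2 0 0 0 id (fun _ => erefl) (fun s => False_ind _ (no_jslot0 s)).

Lemma weight_St_empty (K : fieldType) (N : nat) : weight_St K N jd_empty = 1%:M.
Proof.
have card_slot : #|jd_slot jd_empty| = 0%N by apply: eq_card0 => s; case: (no_jslot0 s).
have lab0 (lab : labelling N jd_empty) : lab = ffun0 card_slot.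
  by apply/ffunP => s; case: (no_jslot0 s).
rewrite weight_StE (big_pred1 (ffun0 card_slot)) => [|lab].
  by rewrite /labelling_weight /vertex_factor /strand_prod !big_ord0 scale1r tensmx11.
by rewrite (lab0 lab) /= eqxx; apply/forallP => s; case: (no_jslot0 s).
Qed.

Section Stacking.
Variables (K : fieldType) (N : nat) (D E : jacobi2).

Local Notation stack_slot :=
  (jslot (jd_n1 D + jd_n1 E) (jd_n2 D + jd_n2 E) (jd_nt D + jd_nt E)).

Definition stack_split (s : stack_slot) : jd_slot D + jd_slot E :=
  match s with
  | inl (inl i) => match split i with inl i' => inl (leg1 i') | inr i' => inr (leg1 i') end
  | inl (inr i) => match split i with inl i' => inl (leg2 i') | inr i' => inr (leg2 i') end
  | inr (v, k) => match split v with inl v' => inl (tri v' k) | inr v' => inr (tri v' k) end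
  end.

Definition stack_unsplit (u : jd_slot D + jd_slot E) : stack_slot :=
  match u with
  | inl (inl (inl i)) => inl (inl (lshift _ i))
  | inl (inl (inr i)) => inl (inr (lshift _ i))
  | inl (inr (v, k)) => inr (lshift _ v, k)
  | inr (inl (inl i)) => inl (inl (rshift _ i))
  | inr (inl (inr i)) => inl (inr (rshift _ i))
  | inr (inr (v, k)) => inr (rshift _ v, k)
  end.

Lemma stack_splitK : cancel stack_split stack_unsplit.
Proof.
case=> [[i|i]|[v k]] /=.
- by case Hs: (split i) => [j|j] /=; rewrite -[in RHS](splitK i) Hs.
- by case Hs: (split i) => [j|j] /=; rewrite -[in RHS](splitK i) Hs.
- by case Hs: (split v) => [j|j] /=; rewrite -[in RHS](splitK v) Hs.
Qed.

Lemma stack_unsplitK : cancel stack_unsplit stack_split.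
Proof.
by case=> [[[i|i]|[v k]]|[[i|i]|[v k]]] /=;
  rewrite ?(unsplitK (inl _ : 'I__ + 'I__)) ?(unsplitK (inr _ : 'I__ + 'I__)).
Qed.

Definition sum_edge (u : jd_slot D + jd_slot E) : jd_slot D + jd_slot E :=
  match u with inl x => inl (jd_edge x) | inr y => inr (jd_edge y) end.

Definition stack_edge (s : stack_slot) : stack_slot :=
  stack_unsplit (sum_edge (stack_split s)).

Lemma stack_edge_invol s : stack_edge (stack_edge s) = s.
Proof.
rewrite /stack_edge stack_unsplitK -[in RHS](stack_splitK s); congr stack_unsplit.
by case: (stack_split s) => [x|y] /=; rewrite jd_edge_invol.
Qed.

Lemma stack_edge_nofix s : stack_edge s <> s.
Proof.
rewrite /stack_edge => /(congr1 stack_split); rewrite stack_unsplitK.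
by case: (stack_split s) => [x|y] /= [] /jd_edge_nofix.
Qed.

Definition jd_stack : jacobi2 := Jacobi2 stack_edge_invol stack_edge_nofix.

Lemma jd_stack_edge_unsplit u :
  @jd_edge jd_stack (stack_unsplit u) = stack_unsplit (sum_edge u).
Proof. by rewrite /= /stack_edge stack_unsplitK. Qed.

Definition stack_labelling (p : labelling N D * labelling N E) : labelling N jd_stack :=
  [ffun s => match stack_split s with inl x => p.1 x | inr y => p.2 y end].

Lemma stack_labellingE p u :
  stack_labelling p (stack_unsplit u) = match u with inl x => p.1 x | inr y => p.2 y end.
Proof. by rewrite ffunE stack_unsplitK. Qed.

Lemma stack_labelling_bij : bijective stack_labelling.
Proof.
exists (fun lab : labelling N jd_stack =>
  ([ffun x => lab (stack_unsplit (inl x))] : labelling N D,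
   [ffun y => lab (stack_unsplit (inr y))] : labelling N E)).
- by case=> p1 p2; congr (_, _); apply/ffunP => x; rewrite !ffunE stack_unsplitK.
- move=> lab; apply/ffunP => s; rewrite ffunE -[in RHS](stack_splitK s).
  by case: (stack_split s) => [x|y]; rewrite ffunE.
Qed.

Lemma admissible_stack p :
  admissible (stack_labelling p) = admissible p.1 && admissible p.2.
Proof.
apply/forallP/andP => [adm|[/forallP adm1 /forallP adm2] s].
  split; apply/forallP => x;
    [have := adm (stack_unsplit (inl x)) | have := adm (stack_unsplit (inr x))];
    by rewrite jd_stack_edge_unsplit !stack_labellingE.
rewrite -(stack_splitK s) jd_stack_edge_unsplit.
by case: (stack_split s) => [x|y]; rewrite !stack_labellingE; [exact: adm1 | exact: adm2].
Qed.

Lemma strand_prod_split (m n : nat) (F : 'I_(m + n) -> 'M[K]_N) :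
  strand_prod F =
  strand_prod (fun i => F (lshift n i)) *m strand_prod (fun i => F (rshift m i)).
Proof.
change (\prod_(i < m + n) F i = (\prod_(i < m) F (lshift n i)) * \prod_(i < n) F (rshift m i)).
exact: big_split_ord.
Qed.

Lemma labelling_weight_stack p :
  labelling_weight K (stack_labelling p) = labelling_weight K p.1 *m labelling_weight K p.2.
Proof.
have labE u := stack_labellingE p u.
rewrite /labelling_weight -scalemxAl -scalemxAr scalerA tensmx_mul; congr (_ *: _).
  rewrite /vertex_factor (big_split_ord _ xpredT); congr (_ * _); apply: eq_bigr => v _.
    by rewrite -!(labE (inl (tri v _))).
  by rewrite -!(labE (inr (tri v _))).
by congr tensmx; rewrite strand_prod_split; congr (_ *m _); apply: eq_bigr => i _;
  rewrite -?(labE (inl (leg1 i))) -?(labE (inr (leg1 i)))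
          -?(labE (inl (leg2 i))) -?(labE (inr (leg2 i))).
Qed.

Lemma weight_St_stack : weight_St K N jd_stack = weight_St K N D *m weight_St K N E.
Proof.
rewrite !weight_StE mulmx_suml.
under [RHS]eq_bigr do rewrite mulmx_sumr.
rewrite pair_big_dep (reindex stack_labelling); last exact: onW_bij stack_labelling_bij.
by apply: eq_big => p; rewrite ?admissible_stack // labelling_weight_stack.
Qed.

End Stacking.

Section Conjugation.
Variables (K : fieldType) (N : nat) (g h : 'M[K]_N).
Hypothesis mulhg : h *m g = 1%:M.

Lemma conj_mulmx X Y : g *m (X *m Y) *m h = g *m X *m h *m (g *m Y *m h).
Proof. by rewrite !mulmxA -[g *m X *m h *m g]mulmxA mulhg mulmx1. Qed.

Lemma conj_strand_prod n (F : 'I_n -> 'M[K]_N) :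
  g *m strand_prod F *m h = strand_prod (fun i => g *m F i *m h).
Proof.
apply: (big_morph (fun X => g *m X *m h)) => [X Y|]; first exact: conj_mulmx.
by rewrite mulmx1 mulmx1C.
Qed.

Lemma B0_lie_conj x y z :
  B0 (lie (g *m x *m h) (g *m y *m h)) (g *m z *m h) = B0 (lie x y) z.
Proof.
have -> : lie (g *m x *m h) (g *m y *m h) = g *m lie x y *m h.
  by rewrite /lie -!conj_mulmx mulmxBr mulmxBl.
by rewrite /B0 -conj_mulmx mxtrace_mulC [h *m _]mulmxA mulhg mul1mx.
Qed.

End Conjugation.

Lemma B0_lie_scale (K : fieldType) (N : nat) (a b c : K) (x y z : 'M[K]_N) :
  B0 (lie (a *: x) (b *: y)) (c *: z) = a * b * c * B0 (lie x y) z.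
Proof.
rewrite /B0 /lie -!scalemxAl -!scalemxAr !scalerA [b * a]mulrC -scalerBr -scalemxAl.
by rewrite !mxtraceZ mulrA [c * _]mulrC.
Qed.

Lemma tensmxZ (R : comPzRingType) (m n : nat) (a b : R) (A : 'M[R]_m) (B : 'M[R]_n) :
  tensmx (a *: A) (b *: B) = (a * b) *: tensmx A B.
Proof.
apply/matrixP => x y.
case: (mxtens_indexP x) => i1 i2; case: (mxtens_indexP y) => k1 k2.
by rewrite [LHS]tensmxE [RHS]mxE tensmxE !mxE mulrACA.
Qed.

Lemma strand_prod_scale (K : fieldType) (N n : nat) (c : 'I_n -> K) (X : 'I_n -> 'M[K]_N) :
  strand_prod (fun i => c i *: X i) = (\prod_i c i) *: strand_prod X.
Proof.
apply: (big_rec3 (fun y1 y2 y3 => y1 = y2 *: y3)) => [|i y1 c0 X0 _ ->]; first by rewrite scale1r.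
by rewrite -scalemxAl -scalemxAr scalerA.
Qed.

Lemma prod_ord3 (R : comPzSemiRingType) (f : 'I_3 -> R) : \prod_k f k = f 0 * f 1 * f 2.
Proof.
rewrite !big_ord_recr big_ord0 /= mul1r.
by congr (f _ * f _ * f _); apply: val_inj.
Qed.

Lemma prod_jd_slot (R : comPzSemiRingType) (D : jacobi2) (f : jd_slot D -> R) :
  \prod_s f s = (\prod_i f (leg1 i)) * (\prod_i f (leg2 i)) *
                \prod_v (f (tri v 0) * f (tri v 1) * f (tri v 2)).
Proof.
rewrite /jd_slot !big_sumType; congr (_ * _).
rewrite (eq_bigr (fun p => f (inr (p.1, p.2)))); last by case.
rewrite -(pair_big xpredT xpredT (fun v k => f (inr (v, k)))) /=.
by apply: eq_bigr => v _; rewrite prod_ord3.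
Qed.

Section Monomial.
Variables (K : fieldType) (N : nat) (s : {perm 'I_N}) (d : 'I_N -> K).
Hypothesis d_neq0 : forall i, d i != 0.

Definition monomial_mx : 'M[K]_N := \matrix_(r, c) ((r == s c)%:R * d c).
Definition monomial_invmx : 'M[K]_N := \matrix_(r, c) ((s r == c)%:R / d r).

Lemma mul_monomial_invmx : monomial_invmx *m monomial_mx = 1%:M.
Proof.
apply/matrixP => r c; rewrite !mxE (bigD1 (s r)) //= big1 => [|k /negbTE ksr]; last first.
  by rewrite !mxE (eq_sym (s r)) ksr mulr0n !mul0r.
rewrite !mxE eqxx (inj_eq perm_inj) addr0 mulr1n div1r.
by case: (eqVneq r c) => [->|_]; rewrite ?mul1r ?mul0r ?mulr0 // mulVf.
Qed.

Lemma col_monomial_mx i : col i monomial_mx = d i *: delta_mx (s i) 0.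
Proof. by apply/matrixP => r c; rewrite !mxE ord1 eqxx andbT mulrC. Qed.

Lemma row_monomial_invmx j : row j monomial_invmx = (d j)^-1 *: delta_mx 0 (s j).
Proof. by apply/matrixP => r c; rewrite !mxE ord1 eqxx eq_sym mulrC. Qed.

Lemma monomial_conj_delta i j :
  monomial_mx *m delta_mx i j *m monomial_invmx = (d i / d j) *: delta_mx (s i) (s j).
Proof.
rewrite -(mul_delta_mx (0 : 'I_1)) mulmxA -colE -mulmxA -rowE.
by rewrite col_monomial_mx row_monomial_invmx -scalemxAl -scalemxAr mul_delta_mx scalerA.
Qed.

Definition relabel (D : jacobi2) (lab : labelling N D) : labelling N D :=
  [ffun t => (s (lab t).1, s (lab t).2)].

Lemma admissible_relabel D (lab : labelling N D) : admissible (relabel lab) = admissible lab.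
Proof.
apply: eq_forallb => t; rewrite !ffunE /dual_idx /= !xpair_eqE !(inj_eq perm_inj).
by rewrite [lab (jd_edge t)]surjective_pairing xpair_eqE.
Qed.

Lemma relabel_inj D : injective (@relabel D).
Proof.
move=> l1 l2 /ffunP eq_l; apply/ffunP => t; move: (eq_l t); rewrite !ffunE.
by case: (l1 t) (l2 t) => [i1 j1] [i2 j2] [/perm_inj -> /perm_inj ->].
Qed.

Definition conj_factor (ij : 'I_N * 'I_N) : K := d ij.1 / d ij.2.

Lemma prod_conj_factor D (lab : labelling N D) :
  admissible lab -> \prod_t conj_factor (lab t) = 1.
Proof.
move=> /forallP adm; rewrite /conj_factor prodf_div.
have -> : \prod_t d (lab t).2 = \prod_t d (lab t).1.
  rewrite (reindex_inj (can_inj (@jd_edge_invol D))) /=.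
  by apply: eq_bigr => t _; rewrite (eqP (adm t)).
by rewrite divff //; apply/prodf_neq0 => t _.
Qed.

Local Notation g := monomial_mx.
Local Notation h := monomial_invmx.

Lemma vertex_factor_relabel D (lab : labelling N D) :
  vertex_factor K lab =
  (\prod_v (conj_factor (lab (tri v 0)) * conj_factor (lab (tri v 1)) *
            conj_factor (lab (tri v 2)))) * vertex_factor K (relabel lab).
Proof.
rewrite /vertex_factor -big_split /=; apply: eq_bigr => v _.
rewrite -(B0_lie_conj mul_monomial_invmx) /glE !monomial_conj_delta B0_lie_scale.
by rewrite !ffunE /conj_factor; ring.
Qed.

Lemma labelling_weight_conj D (lab : labelling N D) :
  tensmx g g *m labelling_weight K lab *m tensmx h h =
  (\prod_t conj_factor (lab t)) *: labelling_weight K (relabel lab).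
Proof.
have conj_strand n (F : 'I_n -> jd_slot D) :
    g *m strand_prod (fun i => glE K (lab (F i))) *m h =
    (\prod_i conj_factor (lab (F i))) *: strand_prod (fun i => glE K (relabel lab (F i))).
  rewrite conj_strand_prod ?mul_monomial_invmx // -strand_prod_scale.
  by apply: eq_bigr => i _; rewrite /glE monomial_conj_delta ffunE.
rewrite /labelling_weight -scalemxAr -scalemxAl !tensmx_mul !conj_strand tensmxZ !scalerA.
by rewrite prod_jd_slot (vertex_factor_relabel lab); congr (_ *: _); ring.
Qed.

Lemma weight_St_conj D : tensmx g g *m weight_St K N D *m tensmx h h = weight_St K N D.
Proof.
rewrite !weight_StE mulmx_sumr mulmx_suml.
under eq_bigr => lab adm do rewrite labelling_weight_conj (prod_conj_factor adm) scale1r.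
rewrite [RHS](reindex_inj (@relabel_inj D)) /=.
by apply: eq_bigl => lab; rewrite admissible_relabel.
Qed.

Lemma weight_St_monomial_commute D :
  tensmx g g *m weight_St K N D = weight_St K N D *m tensmx g g.
Proof.
rewrite -{2}(weight_St_conj D) -!mulmxA tensmx_mul mul_monomial_invmx tensmx11.
by rewrite mulmx1.
Qed.

End Monomial.

Section TensorIndex.
Variables (K : fieldType) (N : nat).

Definition tens_relabel (s : {perm 'I_N}) (x : 'I_(N * N)) : 'I_(N * N) :=
  mxtens_index (s (mxtens_unindex x).1, s (mxtens_unindex x).2).

Definition tens_diag (d : 'I_N -> K) (x : 'I_(N * N)) : K :=
  d (mxtens_unindex x).1 * d (mxtens_unindex x).2.

Lemma tens_relabel_inj s : injective (tens_relabel s).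
Proof.
move=> x y; case: (mxtens_indexP x) => x1 x2; case: (mxtens_indexP y) => y1 y2.
by rewrite /tens_relabel !mxtens_indexK /= => /mxtens_index_inj [] /perm_inj -> /perm_inj ->.
Qed.

Lemma tens_relabel1 x : tens_relabel 1 x = x.
Proof. by case: (mxtens_indexP x) => x1 x2; rewrite /tens_relabel mxtens_indexK !perm1. Qed.

Lemma tens_monomial_mxE s d a z :
  tensmx (monomial_mx s d) (monomial_mx s d) a z = (a == tens_relabel s z)%:R * tens_diag d z.
Proof.
case: (mxtens_indexP a) => a1 a2; case: (mxtens_indexP z) => z1 z2.
rewrite tensmxE /tens_relabel /tens_diag !mxE mxtens_indexK (inj_eq mxtens_index_inj) xpair_eqE /=.
by case: (a1 == s z1); case: (a2 == s z2) => /=; ring.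
Qed.

Lemma weight_St_monomialE s (d : 'I_N -> K) (d_neq0 : forall i, d i != 0) D x y :
  tens_diag d x * weight_St K N D x y =
  weight_St K N D (tens_relabel s x) (tens_relabel s y) * tens_diag d y.
Proof.
set G := tensmx (monomial_mx s d) (monomial_mx s d).
have := congr1 (fun M : 'M[K]_(N * N) => M (tens_relabel s x) y)
               (weight_St_monomial_commute s d_neq0 D).
rewrite !mxE => commute_xy.
transitivity (\sum_z G (tens_relabel s x) z * weight_St K N D z y).
  rewrite (bigD1 x) //= big1 => [|z /negbTE zx].
    by rewrite tens_monomial_mxE eqxx mulr1n mul1r addr0.
  by rewrite tens_monomial_mxE (inj_eq (@tens_relabel_inj s)) eq_sym zx mulr0n !mul0r.
rewrite commute_xy (bigD1 (tens_relabel s y)) //= big1 => [|z /negbTE zy].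
  by rewrite tens_monomial_mxE eqxx mulr1n mul1r addr0.
by rewrite tens_monomial_mxE zy mulr0n mul0r mulr0.
Qed.

End TensorIndex.

Section TensorFlip.
Variables (R : comPzRingType) (n : nat).

Definition tens_flip (x : 'I_(n * n)) : 'I_(n * n) :=
  mxtens_index ((mxtens_unindex x).2, (mxtens_unindex x).1).

Lemma tens_flipK : involutive tens_flip.
Proof. by move=> x; case: (mxtens_indexP x) => x1 x2; rewrite /tens_flip !mxtens_indexK. Qed.

Definition pair_supported (A : 'M[R]_(n * n)) : Prop :=
  forall x y, A x y != 0 -> (y == x) || (y == tens_flip x).

Definition flip_invariant (A : 'M[R]_(n * n)) : Prop :=
  forall x y, A (tens_flip x) (tens_flip y) = A x y.

Lemma pair_supported_eq0 A x y :
  pair_supported A -> ~~ ((y == x) || (y == tens_flip x)) -> A x y = 0.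
Proof. by move=> suppA; apply: contraNeq; exact: suppA. Qed.

Lemma sum_pair_supported A (F : 'I_(n * n) -> R) x : pair_supported A ->
  \sum_y A x y * F y =
  A x x * F x + (if tens_flip x == x then 0 else A x (tens_flip x) * F (tens_flip x)).
Proof.
move=> suppA; rewrite (bigD1 x) //=; congr (_ + _).
have out y : ~~ ((y == x) || (y == tens_flip x)) -> A x y * F y = 0.
  by move=> /(pair_supported_eq0 suppA) ->; rewrite mul0r.
case: eqP => [fx|/eqP nfx].
  by apply: big1 => y yx; apply: out; rewrite fx orbb.
rewrite (bigD1 (tens_flip x)) //= big1 ?addr0 // => y /andP [yx yfx].
by apply: out; rewrite negb_or yx.
Qed.

Lemma flip_invariant_commute A B :
  pair_supported A -> flip_invariant A -> pair_supported B -> flip_invariant B ->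
  A *m B = B *m A.
Proof.
move=> suppA flipA suppB flipB; apply/matrixP => x z.
rewrite !mxE (sum_pair_supported _ _ suppA) (sum_pair_supported _ _ suppB).
have [->|nzx] := eqVneq z x.
  have eA := flipA x (tens_flip x); have eB := flipB x (tens_flip x).
  rewrite tens_flipK in eA eB.
  by rewrite eA eB; case: ifP => _; ring.
have [ez|nzf] := eqVneq z (tens_flip x).
  by rewrite ez in nzx *; rewrite flipA flipB (negbTE nzx); ring.
have out C : pair_supported C -> C x z = 0 /\ C (tens_flip x) z = 0.
  by move=> suppC; split; apply: pair_supported_eq0; rewrite // ?tens_flipK negb_or nzx nzf.
have [-> ->] := out _ suppA; have [-> ->] := out _ suppB.
by case: ifP => _; ring.
Qed.

End TensorFlip.

Lemma pchar0_natr_inj (R : idomainType) :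
  [pchar R] =i pred0 -> injective (fun n : nat => n%:R : R).
Proof.
move=> /(pcharf0P R).1 natr_eq0 m n; wlog le_mn : m n / (m <= n)%N => [wlog_le|].
  by case/orP: (leq_total m n) => /wlog_le // + /esym => /[apply].
move=> /esym/eqP; rewrite -subr_eq0 -natrB // natr_eq0 subn_eq0 => le_nm.
by apply/eqP; rewrite eqn_leq le_mn.
Qed.

Lemma pair_count_eq (T : eqType) (a1 a2 b1 b2 : T) :
  (forall c, (a1 == c) + (a2 == c) = (b1 == c) + (b2 == c))%N ->
  ((b1, b2) == (a1, a2)) || ((b1, b2) == (a2, a1)).
Proof.
rewrite !xpair_eqE => count_eq.
have [e1|ne1] /= := eqVneq b1 a1.
  subst b1; rewrite [b2 == a2]eq_sym.
  by have := count_eq b2; rewrite eqxx; case: (a2 == b2) => //=; lia.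
have := count_eq b1; rewrite eqxx [a1 == b1]eq_sym (negbTE ne1) /=.
have [e2 _|ne2] := eqVneq a2 b1; last by lia.
subst a2; rewrite /= [b2 == a1]eq_sym.
by have := count_eq b2; rewrite eqxx; case: (a1 == b2) => //=; lia.
Qed.

Section WeightSymmetry.
Variables (K : fieldType) (N : nat) (D : jacobi2).
Hypothesis charK0 : [pchar K] =i pred0.

Lemma weight_St_pair_supported : pair_supported (weight_St K N D).
Proof.
move=> x y; case: (mxtens_indexP x) => a1 a2; case: (mxtens_indexP y) => b1 b2 nz.
rewrite /tens_flip mxtens_indexK !(inj_eq mxtens_index_inj); apply: pair_count_eq => c.
pose d i : K := (2 ^ (i == c))%:R.
have d_neq0 i : d i != 0 by rewrite ((pcharf0P K).1 charK0) expn_eq0.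
have := weight_St_monomialE 1 d_neq0 D (mxtens_index (a1, a2)) (mxtens_index (b1, b2)).
rewrite !tens_relabel1 [LHS]mulrC => /(mulfI nz).
rewrite /tens_diag !mxtens_indexK /d -!natrM -!expnD => /(pchar0_natr_inj charK0).
by rewrite ![_ == c]eq_sym => /expnI; apply.
Qed.

Lemma weight_St_flip_invariant : flip_invariant (weight_St K N D).
Proof.
move=> x y; have suppW := weight_St_pair_supported.
have [near|far] := boolP ((y == x) || (y == tens_flip x)); last first.
  rewrite (pair_supported_eq0 suppW far) (pair_supported_eq0 suppW) //.
  by rewrite !(inj_eq (can_inj (@tens_flipK N))).
case: (mxtens_indexP x) near => a1 a2 near.
have := weight_St_monomialE (tperm a1 a2) (d := fun=> 1) (fun=> oner_neq0 K) D
                            (mxtens_index (a1, a2)) y.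
rewrite /tens_diag !mulr1 mul1r => ->.
have relabel_flip z : (z == mxtens_index (a1, a2)) || (z == tens_flip (mxtens_index (a1, a2))) ->
    tens_relabel (tperm a1 a2) z = tens_flip z.
  by case/orP => /eqP ->; rewrite /tens_relabel /tens_flip !mxtens_indexK /= tpermL tpermR.
by rewrite !relabel_flip ?eqxx.
Qed.

End WeightSymmetry.

Lemma mulmx_sum_scale (R : comPzRingType) (n : nat) (I : Type) (f : I -> 'M[R]_n)
    (s t : seq (R * I)) :
  (\sum_(p <- s) p.1 *: f p.2) *m (\sum_(q <- t) q.1 *: f q.2) =
  \sum_(p <- s) \sum_(q <- t) (p.1 * q.1) *: (f p.2 *m f q.2).
Proof.
rewrite mulmx_suml; apply: eq_bigr => p _; rewrite mulmx_sumr; apply: eq_bigr => q _.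
by rewrite -scalemxAl -scalemxAr scalerA.
Qed.

Unset Implicit Arguments.

Theorem corollary5p2 (K : fieldType) (N : nat)
    (charK0 : [pchar K] =i pred0) (hN : (1 <= N)%N) :
  @weight_image K N 1%:M /\
  (forall x y, @weight_image K N x -> @weight_image K N y ->
     @weight_image K N (x *m y)) /\
  (forall x y, @weight_image K N x -> @weight_image K N y ->
     x *m y = y *m x).
Proof.
split; first by exists [:: (1, jd_empty)]; rewrite big_seq1 scale1r weight_St_empty.
split=> x y [s ->] [t ->]; rewrite mulmx_sum_scale.
  exists [seq (p.1 * q.1, jd_stack p.2 q.2) | p <- s, q <- t].
  rewrite big_allpairs_dep; apply: eq_bigr => p _; apply: eq_bigr => q _.
  by rewrite weight_St_stack.
rewrite mulmx_sum_scale exchange_big; apply: eq_bigr => p _; apply: eq_bigr => q _.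
rewrite mulrC; congr (_ *: _); apply: flip_invariant_commute;
  by [apply: weight_St_pair_supported | apply: weight_St_flip_invariant].
Qed.
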